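(* Let $A\in\mathbb{F}_2^{m_A\times n_A}$, $B\in\mathbb{F}_2^{m_B\times n_B}$ and consider the hypergraph product code $H_X=[A\otimes I_{m_B}\mid I_{m_A}\otimes B]$, $H_Z=[I_{n_A}\otimes B^{T}\mid A^{T}\otimes I_{n_B}]$. The left--right circuit with left/right partition given by this block structure (so $L_X=A\otimes I_{m_B}$, $R_X=I_{m_A}\otimes B$, $L_Z=I_{n_A}\otimes B^T$, $R_Z=A^T\otimes I_{n_B}$) and minimal edge colourings of $L_X,R_X,L_Z,R_Z$ has depth $t=\delta(A)+\delta(B)+2$. Moreover $\delta(H_{XZ})=\delta(A)+\delta(B)$, so every single-ancilla CNOT-based SEC for this code has depth at least $\delta(A)+\delta(B)$.
   Context: For a binary matrix $M$, $r(M)$ and $c(M)$ are its maximum row and column weights and $\delta(M)=\max(r(M),c(M))$ (the maximum degree of its bipartite Tanner graph, with a variable node per column, a check node per row, and an edge per entry 1). $H_{XZ}$ denotes $H_X$ stacked vertically above $H_Z$. Single-ancilla CNOT-based SEC: each check (row of $H_X$ or $H_Z$) has a dedicated ancilla; an $X$ check's ancilla is prepared in $|+\rangle$, CNOTs go from ancilla to each data qubit in its support, then measured in $X$; a $Z$ check's ancilla is prepared in $|0\rangle$, CNOTs go from each data qubit in its support to the ancilla, then measured in $Z$. Each operation takes one time step and a qubit participates in at most one operation per step. The depth of an SEC is $t=\lim_{m\to\infty}T^{(m)}/m$, where $T^{(m)}$ is the number of time steps for $m$ consecutive rounds (rounds may overlap in time). Left--right circuit (LRC): partition the data qubits into a left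 and right set, writing $H_X=[L_X\mid R_X]$, $H_Z=[L_Z\mid R_Z]$. Choose a proper edge colouring $C(H)$ with colours $\{1,\dots,|C(H)|\}$ of the Tanner graph of each $H\in\{L_X,R_X,L_Z,R_Z\}$ (minimal means $|C(H)|=\delta(H)$). CNOTs of $L_X$ and $R_Z$ are applied in parallel, the CNOT on an edge of colour $c$ at time step $c+1$, taking $t_1=\max(|C(L_X)|,|C(R_Z)|)$ steps; then CNOTs of $L_Z$ and $R_X$ are applied with colour $c$ at time step $t_1+1+c$, taking $t_2=\max(|C(L_Z)|,|C(R_X)|)$ steps. $X$ ancillas are prepared at step 1 and measured at step $t_1+t_2+2$; $Z$ ancillas are measured at step $t_1+2$ and prepared at step $t_1+3$ (for the next round), with rounds repeated periodically, so the LRC has depth $t_1+t_2+2$. *)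

From mathcomp Require Import all_boot all_order all_algebra.
From mathcomp Require Import mxtens.
From mathcomp Require Import all_classical all_reals all_analysis.

Set Implicit Arguments.
Unset Strict Implicit.
Unset Printing Implicit Defensive.

Import Order.TTheory GRing.Theory Num.Theory.
Import numFieldNormedType.Exports.

Notation bmx m n := ('M['F_2]_(m, n)).

Section Weights.
Variables (m n : nat).
Implicit Type M : bmx m n.

Definition row_wt M (i : 'I_m) : nat := #|[set j : 'I_n | M i j != 0%R]|.
Definition col_wt M (j : 'I_n) : nat := #|[set i : 'I_m | M i j != 0%R]|.

Definition rmax M : nat := \max_(i < m) row_wt M i.
Definition cmax M : nat := \max_(j < n) col_wt M j.
Definition delta M : nat := maxn (rmax M) (cmax M).

(* A proper edge colouring of the Tanner graph of M (check node per row,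
   variable node per column, edge per entry 1) with colour set {1,...,k}:
   col i j is the colour of edge (i,j) (only meaningful when M i j = 1). *)
Definition proper_edge_colouring M (k : nat) (col : 'I_m -> 'I_n -> nat) : Prop :=
  [/\ (forall i j, M i j != 0%R -> 1 <= col i j <= k),
      (forall i j j', M i j != 0%R -> M i j' != 0%R -> j != j' -> col i j != col i j')
    & (forall i i' j, M i j != 0%R -> M i' j != 0%R -> i != i' -> col i j != col i' j)].
End Weights.

Definition HXZ (mx mz n : nat) (HX : bmx mx n) (HZ : bmx mz n) : bmx (mx + mz) n :=
  col_mx HX HZ.

(* Left--right circuit for H_X = [L_X | R_X], H_Z = [L_Z | R_Z]: the data
   of a proper edge colouring (with |C(H)| = k_H colours) of each block.  *)
Record LRC (mx mz nl nr : nat)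
    (LX : bmx mx nl) (RX : bmx mx nr) (LZ : bmx mz nl) (RZ : bmx mz nr) := {
  kLX : nat; cLX : 'I_mx -> 'I_nl -> nat; cLX_proper : proper_edge_colouring LX kLX cLX;
  kRX : nat; cRX : 'I_mx -> 'I_nr -> nat; cRX_proper : proper_edge_colouring RX kRX cRX;
  kLZ : nat; cLZ : 'I_mz -> 'I_nl -> nat; cLZ_proper : proper_edge_colouring LZ kLZ cLZ;
  kRZ : nat; cRZ : 'I_mz -> 'I_nr -> nat; cRZ_proper : proper_edge_colouring RZ kRZ cRZ }.

Definition lrc_minimal mx mz nl nr LX RX LZ RZ (C : @LRC mx mz nl nr LX RX LZ RZ) : Prop :=
  [/\ kLX C = delta LX, kRX C = delta RX, kLZ C = delta LZ & kRZ C = delta RZ].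

Definition lrc_depth mx mz nl nr LX RX LZ RZ (C : @LRC mx mz nl nr LX RX LZ RZ) : nat :=
  maxn (kLX C) (kRZ C) + maxn (kLZ C) (kRX C) + 2.

(* Single-ancilla CNOT-based SEC for a check matrix H (rows = X and Z
   checks, each with its own dedicated ancilla; columns = data qubits).
   Operations of m rounds: in round k, check i's ancilla is prepared,
   undergoes one CNOT with each data qubit j in the support of row i,
   and is measured.  (The preparation basis and CNOT direction depend on
   the X/Z type of the check; they play no role in the timing.)          *)
Inductive sec_op (m r n : nat) :=
  | Prep of 'I_m & 'I_r
  | Meas of 'I_m & 'I_r
  | CNOT of 'I_m & 'I_r & 'I_n.
Arguments Prep {m r n}.
Arguments Meas {m r n}.
Arguments CNOT {m r n}.

Inductive qubit (r n : nat) := Anc of 'I_r | Data of 'I_n.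
Arguments Anc {r n}.
Arguments Data {r n}.

Section SEC.
Variables (r n : nat) (H : bmx r n).

Definition sec_op_valid m (o : sec_op m r n) : bool :=
  if o is CNOT _ i j then H i j != 0%R else true.

Definition acts_on m (o : sec_op m r n) (q : qubit r n) : bool :=
  match o, q with
  | Prep _ i, Anc i' => i == i'
  | Meas _ i, Anc i' => i == i'
  | CNOT _ i _, Anc i' => i == i'
  | CNOT _ _ j, Data j' => j == j'
  | _, _ => false
  end.

(* Rounds may overlap. *)
Record sec_schedule (m T : nat) := {
  time : sec_op m r n -> nat;
  time_bound : forall o, sec_op_valid o -> time o < T;
  one_op_per_step : forall (o o' : sec_op m r n) (q : qubit r n),
      sec_op_valid o -> sec_op_valid o' -> o <> o' ->
      acts_on o q -> acts_on o' q -> time o <> time o';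
  prep_before_cnot : forall (k : 'I_m) (i : 'I_r) (j : 'I_n), H i j != 0%R -> time (Prep k i) < time (CNOT k i j);
  cnot_before_meas : forall (k : 'I_m) (i : 'I_r) (j : 'I_n), H i j != 0%R -> time (CNOT k i j) < time (Meas k i) }.

Definition sec_has_depth (R : realType) (T : nat -> nat)
    (S : forall m, sec_schedule m (T m)) (t : R) : Prop :=
  ((fun m : nat => ((T m)%:R / m%:R : R)%R) @ \oo --> t)%classic.
End SEC.

Section HGP.
Variables (mA nA mB nB : nat) (A : bmx mA nA) (B : bmx mB nB).

Definition hgp_LX : bmx (mA * mB) (nA * mB) := A *t (1%:M : bmx mB mB).
Definition hgp_RX : bmx (mA * mB) (mA * nB) := (1%:M : bmx mA mA) *t B.
Definition hgp_LZ : bmx (nA * nB) (nA * mB) := (1%:M : bmx nA nA) *t B^T.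
Definition hgp_RZ : bmx (nA * nB) (mA * nB) := A^T *t (1%:M : bmx nB nB).

Definition hgp_HX : bmx (mA * mB) (nA * mB + mA * nB) := row_mx hgp_LX hgp_RX.
Definition hgp_HZ : bmx (nA * nB) (nA * mB + mA * nB) := row_mx hgp_LZ hgp_RZ.
End HGP.

From mathcomp Require Import all_boot all_order all_algebra.
From mathcomp Require Import mxtens.
From mathcomp Require Import all_classical all_reals all_analysis.
From mathcomp Require Import zify.

(* The Tanner graph of A *t 1 or 1 *t A has the same degrees as that of A, so
   the four LRC blocks have delta equal to delta A or delta B and the depth is
   t1 + t2 + 2 = delta A + delta B + 2.  In H_XZ every row and column weight is
   a weight of A plus a weight of B, whence
   delta H_XZ = max(r A, c A) + max(r B, c B).  Finally, a qubit takes part in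
   at most one CNOT per step, so m rounds need at least m * delta H steps, and
   the bound T^(m) / m >= delta H passes to the limit. *)

Set Implicit Arguments.
Unset Strict Implicit.
Unset Printing Implicit Defensive.

Import Order.TTheory GRing.Theory Num.Theory.

Section Weights.
Variables m n : nat.
Implicit Types M : bmx m n.

Lemma row_wt_tr M (j : 'I_n) : row_wt M^T j = col_wt M j.
Proof. by apply: eq_card => i; rewrite !inE mxE. Qed.

Lemma col_wt_tr M (i : 'I_m) : col_wt M^T i = row_wt M i.
Proof. by apply: eq_card => j; rewrite !inE mxE. Qed.

Lemma rmax_tr M : rmax M^T = cmax M.
Proof. by apply: eq_bigr => j _; rewrite row_wt_tr. Qed.

Lemma cmax_tr M : cmax M^T = rmax M.
Proof. by apply: eq_bigr => i _; rewrite col_wt_tr. Qed.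

Lemma delta_tr M : delta M^T = delta M.
Proof. by rewrite /delta rmax_tr cmax_tr maxnC. Qed.

End Weights.

Lemma row_wt1 n (i : 'I_n) : row_wt (1%:M : bmx n n) i = 1.
Proof.
rewrite /row_wt -[RHS](cards1 i); apply: eq_card => j.
by rewrite !inE mxE (eq_sym j i); case: (i == j).
Qed.

Lemma col_wt1 n (j : 'I_n) : col_wt (1%:M : bmx n n) j = 1.
Proof. by rewrite -row_wt_tr trmx1 row_wt1. Qed.

Lemma row_wt_tens m1 n1 m2 n2 (X : bmx m1 n1) (Y : bmx m2 n2) i k :
  row_wt (X *t Y) (mxtens_index (i, k)) = row_wt X i * row_wt Y k.
Proof.
rewrite /row_wt -cardsX -(card_imset _ (can_inj (@mxtens_indexK _ _))).
rewrite (can2_imset_pre _ (@mxtens_indexK _ _) (@mxtens_unindexK _ _)).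
apply: eq_card => c; case: (mxtens_indexP c) => j l.
by rewrite !inE mxtens_indexK tensmxE mulf_eq0 negb_or.
Qed.

Lemma col_wt_tens m1 n1 m2 n2 (X : bmx m1 n1) (Y : bmx m2 n2) j l :
  col_wt (X *t Y) (mxtens_index (j, l)) = col_wt X j * col_wt Y l.
Proof. by rewrite -row_wt_tr trmx_tens row_wt_tens !row_wt_tr. Qed.

Lemma row_wt_row_mx m n1 n2 (L : bmx m n1) (R : bmx m n2) i :
  row_wt (row_mx L R) i = row_wt L i + row_wt R i.
Proof.
rewrite /row_wt -!sum1_card big_mkcond big_split_ord -!big_mkcond /=.
by congr (_ + _); apply: eq_bigl => j; rewrite !inE (row_mxEl, row_mxEr).
Qed.

Lemma col_wt_col_mx m1 m2 n (U : bmx m1 n) (D : bmx m2 n) j :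
  col_wt (col_mx U D) j = col_wt U j + col_wt D j.
Proof. by rewrite -!row_wt_tr tr_col_mx row_wt_row_mx. Qed.

Lemma row_wt_col_mxu m1 m2 n (U : bmx m1 n) (D : bmx m2 n) i :
  row_wt (col_mx U D) (lshift m2 i) = row_wt U i.
Proof. by apply: eq_card => j; rewrite !inE col_mxEu. Qed.

Lemma row_wt_col_mxd m1 m2 n (U : bmx m1 n) (D : bmx m2 n) i :
  row_wt (col_mx U D) (rshift m1 i) = row_wt D i.
Proof. by apply: eq_card => j; rewrite !inE col_mxEd. Qed.

Lemma rmax_col_mx m1 m2 n (U : bmx m1 n) (D : bmx m2 n) :
  rmax (col_mx U D) = maxn (rmax U) (rmax D).
Proof.
rewrite /rmax big_split_ord /=.
by congr maxn; apply: eq_bigr => i _; rewrite (row_wt_col_mxu, row_wt_col_mxd).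
Qed.

Lemma cmax_row_mx m n1 n2 (L : bmx m n1) (R : bmx m n2) :
  cmax (row_mx L R) = maxn (cmax L) (cmax R).
Proof. by rewrite -rmax_tr tr_row_mx rmax_col_mx !rmax_tr. Qed.

Lemma bigmax_mxtens p q (op : nat -> nat -> nat) (F : 'I_(p * q) -> nat)
    (f : 'I_p -> nat) (g : 'I_q -> nat) :
  (forall x y x' y', x <= x' -> y <= y' -> op x y <= op x' y') ->
  (forall a b, F (mxtens_index (a, b)) = op (f a) (g b)) ->
  0 < p -> 0 < q ->
  \max_c F c = op (\max_a f a) (\max_b g b).
Proof.
move=> op_mono Fdef p_gt0 q_gt0; apply/eqP; rewrite eqn_leq; apply/andP; split.
  apply/bigmax_leqP => c _; case: (mxtens_indexP c) => a b.
  by rewrite Fdef; apply: op_mono; apply: leq_bigmax.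
rewrite (bigop.bigmax_eq_arg (Ordinal p_gt0)) //.
by rewrite (bigop.bigmax_eq_arg (Ordinal q_gt0)) // -Fdef leq_bigmax.
Qed.

Lemma rmax_tens m1 n1 m2 n2 (X : bmx m1 n1) (Y : bmx m2 n2) :
  0 < m1 -> 0 < m2 -> rmax (X *t Y) = rmax X * rmax Y.
Proof. exact: bigmax_mxtens leq_mul (@row_wt_tens _ _ _ _ X Y). Qed.

Lemma cmax_tens m1 n1 m2 n2 (X : bmx m1 n1) (Y : bmx m2 n2) :
  0 < n1 -> 0 < n2 -> cmax (X *t Y) = cmax X * cmax Y.
Proof. exact: bigmax_mxtens leq_mul (@col_wt_tens _ _ _ _ X Y). Qed.

Lemma rmax1 n : 0 < n -> rmax (1%:M : bmx n n) = 1.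
Proof.
move=> n_gt0; rewrite /rmax (eq_bigr (fun=> 1)) => [|i _]; last exact: row_wt1.
by rewrite (bigop.bigmax_eq_arg (Ordinal n_gt0)).
Qed.

Lemma cmax1 n : 0 < n -> cmax (1%:M : bmx n n) = 1.
Proof. by move=> n_gt0; rewrite -rmax_tr trmx1 rmax1. Qed.

Lemma delta_tensmx1 m n p (X : bmx m n) : 0 < m -> 0 < n -> 0 < p ->
  delta (X *t (1%:M : bmx p p)) = delta X.
Proof. by move=> *; rewrite /delta rmax_tens ?cmax_tens ?rmax1 ?cmax1 ?muln1. Qed.

Lemma delta_tens1mx m n p (X : bmx m n) : 0 < m -> 0 < n -> 0 < p ->
  delta ((1%:M : bmx p p) *t X) = delta X.
Proof. by move=> *; rewrite /delta rmax_tens ?cmax_tens ?rmax1 ?cmax1 ?mul1n. Qed.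

Section HypergraphProduct.
Variables (mA nA mB nB : nat) (A : bmx mA nA) (B : bmx mB nB).
Hypotheses (mA_gt0 : 0 < mA) (nA_gt0 : 0 < nA) (mB_gt0 : 0 < mB) (nB_gt0 : 0 < nB).

Lemma lrc_depth_hgp
    (C : LRC (hgp_LX mB A) (hgp_RX mA B) (hgp_LZ nA B) (hgp_RZ nB A)) :
  lrc_minimal C -> lrc_depth C = delta A + delta B + 2.
Proof.
rewrite /lrc_depth => -[-> -> -> ->]; rewrite /hgp_LX /hgp_RX /hgp_LZ /hgp_RZ.
by rewrite delta_tensmx1 ?delta_tens1mx ?delta_tensmx1 ?delta_tens1mx ?delta_tr ?maxnn.
Qed.

Lemma rmax_hgp_HX : rmax (hgp_HX A B) = rmax A + rmax B.
Proof.
apply: bigmax_mxtens leq_add _ _ _ => // a b.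
by rewrite row_wt_row_mx !row_wt_tens !row_wt1 muln1 mul1n.
Qed.

Lemma rmax_hgp_HZ : rmax (hgp_HZ A B) = cmax A + cmax B.
Proof.
apply: bigmax_mxtens leq_add _ _ _ => // a b.
by rewrite row_wt_row_mx !row_wt_tens !row_wt1 muln1 mul1n !row_wt_tr addnC.
Qed.

Lemma cmax_hgp_HXZ :
  cmax (HXZ (hgp_HX A B) (hgp_HZ A B)) = maxn (cmax A + rmax B) (rmax A + cmax B).
Proof.
rewrite /HXZ -[col_mx _ _]/(block_mx _ _ _ _) block_mxEh cmax_row_mx.
congr maxn; apply: bigmax_mxtens leq_add _ _ _ => // a b.
  by rewrite col_wt_col_mx !col_wt_tens !col_wt1 muln1 mul1n col_wt_tr.
by rewrite col_wt_col_mx !col_wt_tens !col_wt1 muln1 mul1n col_wt_tr addnC.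
Qed.

Lemma delta_hgp_HXZ : delta (HXZ (hgp_HX A B) (hgp_HZ A B)) = delta A + delta B.
Proof.
rewrite /delta rmax_col_mx rmax_hgp_HX rmax_hgp_HZ cmax_hgp_HXZ.
lia.
Qed.

End HypergraphProduct.

Section ScheduleLowerBound.
Variables (r n : nat) (H : bmx r n) (m T : nat) (S : sec_schedule H m T).

(* Distinct operations on a common qubit occupy distinct steps among 0, ..., T-1. *)
Lemma card_ops_on_qubit (I : finType) (P : {set I}) (op : I -> sec_op m r n)
    (q : qubit r n) :
  {in P &, injective op} ->
  (forall x, x \in P -> sec_op_valid H (op x) && acts_on (op x) q) ->
  #|P| <= T.
Proof.
move=> op_inj opP.
have time_inj : {in P &, injective (time S \o op)}.
  move=> x y xP yP /= eq_time; case: (eqVneq x y) => // neq_xy; exfalso.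
  have /andP[valid_x on_x] := opP x xP; have /andP[valid_y on_y] := opP y yP.
  apply: (one_op_per_step valid_x valid_y _ on_x on_y eq_time).
  by move/(op_inj x y xP yP)/eqP; rewrite (negbTE neq_xy).
have uniq_times : uniq [seq time S (op x) | x <- enum P].
  by rewrite map_inj_in_uniq ?enum_uniq // => x y; rewrite !mem_enum; apply: time_inj.
have times_sub : {subset [seq time S (op x) | x <- enum P] <= iota 0 T}.
  move=> t /mapP[x]; rewrite mem_enum => /opP/andP[valid_x _] ->.
  by rewrite mem_iota add0n (time_bound S valid_x).
by have := uniq_leq_size uniq_times times_sub; rewrite size_map size_iota -cardE.
Qed.

Lemma rounds_row_wt_le (i : 'I_r) : m * row_wt H i <= T.
Proof.
rewrite -[m]card_ord -cardsT -cardsX.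
apply: (@card_ops_on_qubit _ _ (fun kj => CNOT kj.1 i kj.2) (Anc i)).
  by move=> [k j] [k' j'] _ _ [-> ->].
by move=> [k j]; rewrite !inE /= eqxx andbT.
Qed.

Lemma rounds_col_wt_le (j : 'I_n) : m * col_wt H j <= T.
Proof.
rewrite -[m]card_ord -cardsT -cardsX.
apply: (@card_ops_on_qubit _ _ (fun ki => CNOT ki.1 ki.2 j) (Data j)).
  by move=> [k i] [k' i'] _ _ [-> ->].
by move=> [k i]; rewrite !inE /= eqxx andbT.
Qed.

Lemma rounds_delta_le : 0 < m -> delta H * m <= T.
Proof.
move=> m_gt0; rewrite -leq_divRL // geq_max.
by apply/andP; split; apply/bigmax_leqP => k _; rewrite leq_divRL // mulnC
  ?rounds_row_wt_le ?rounds_col_wt_le.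
Qed.

End ScheduleLowerBound.

Lemma sec_depth_ge_delta r n (H : bmx r n) (R : realType) (T : nat -> nat)
    (S : forall m, sec_schedule H m (T m)) (t : R) :
  sec_has_depth S t -> ((delta H)%:R <= t)%R.
Proof.
move=> St; apply: (cvgr_to_ge St); exists 1%N => // m /= m_gt0.
by rewrite ler_pdivlMr ?ltr0n // -natrM ler_nat (rounds_delta_le (S m)).
Qed.

Theorem proposition1 (mA nA mB nB : nat) (A : bmx mA nA) (B : bmx mB nB) :
  (0 < mA)%N -> (0 < nA)%N -> (0 < mB)%N -> (0 < nB)%N ->
  (* the LRC with the block partition and minimal edge colourings has depth delta(A)+delta(B)+2 *)
  (forall C : LRC (hgp_LX mB A) (hgp_RX mA B) (hgp_LZ nA B) (hgp_RZ nB A),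
      lrc_minimal C -> lrc_depth C = (delta A + delta B + 2)%N)
  /\ delta (HXZ (hgp_HX A B) (hgp_HZ A B)) = (delta A + delta B)%N
  /\ (forall (R : realType) (T : nat -> nat)
        (S : forall m, sec_schedule (HXZ (hgp_HX A B) (hgp_HZ A B)) m (T m)) (t : R),
        sec_has_depth S t -> ((delta A + delta B)%:R <= t)%R).
Proof.
move=> mA_gt0 nA_gt0 mB_gt0 nB_gt0.
have delta_HXZ := delta_hgp_HXZ A B mA_gt0 nA_gt0 mB_gt0 nB_gt0.
split; first exact: lrc_depth_hgp.
by split=> // R T S t /sec_depth_ge_delta; rewrite delta_HXZ.
Qed.
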